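(* Let $\mathcal{B}$ be a real uniform Banach space and $\Omega:\mathcal{B}\to\mathbb{R}$ admissible. Let $m\in\mathbb{N}$ and data $(x_i,y_i)_{i=1}^m\subset\mathcal{B}\times\mathbb{R}$ be such that the constraints $[f,x_i]=y_i$ ($i=1,\dots,m$) can be satisfied. Let $f_0\in\mathcal{B}$ be such that $f_0^*=\sum_{i=1}^m c_ix_i^*$ for some $c_1,\dots,c_m\in\mathbb{R}$. Then $f_0$ is a solution of the regularised interpolation problem $\min\{\Omega(f): f\in\mathcal{B},\ [f,x_i]=y_i\ \forall i\}$ if and only if $f_0$ is a solution of the minimal norm interpolation problem $\min\{\|f\|: f\in\mathcal{B},\ [f,x_i]=y_i\ \forall i\}$.
   Context: A real Banach space $\mathcal{B}$ is called uniform if it is uniformly convex and uniformly smooth (equivalently, its norm is uniformly Fréchet differentiable). On such a space there is a unique semi-inner product inducing the norm, i.e. a unique map $[\cdot,\cdot]:\mathcal{B}\times\mathcal{B}\to\mathbb{R}$ that is linear in the first argument, satisfies $[x,x]=\|x\|^2$, $|[x,y]|^2\le[x,x][y,y]$ and $[x,\lambda y]=\lambda[x,y]$ for $\lambda\in\mathbb{R}$; it is given by $[y,x]=\|x\|\lim_{t\to0}\frac{\|x+ty\|-\|x\|}{t}$ for $x\neq0$ (and $[y,0]=0$). The duality map $x\mapsto x^*$, $x^*(y)=[y,x]$, is a (nonlinear in general, but positively and negatively homogeneous) isometric bijection $\mathcal{B}\to\mathcal{B}^*$. Given $m\in\mathbb{N}$ and data $(x_i,y_i)\in\mathcal{B}\times\mathbb{R}$,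 $i=1,\dots,m$, the regularised interpolation problem is $\min\{\Omega(f): f\in\mathcal{B},\ [f,x_i]=y_i\ \forall i=1,\dots,m\}$. A function $\Omega:\mathcal{B}\to\mathbb{R}$ is called admissible if for every $m\in\mathbb{N}$ and every data $(x_i,y_i)_{i=1}^m\subset\mathcal{B}\times\mathbb{R}$ for which the constraints $[f,x_i]=y_i$ can be satisfied, the regularised interpolation problem has a minimiser $f_0$ whose dual element satisfies $f_0^*=\sum_{i=1}^m c_i x_i^*$ for some $c_i\in\mathbb{R}$. *)

From Stdlib Require Import Reals Lra.
Open Scope R_scope.

Record NormedSpace := {
  carrier :> Type;
  vzero : carrier;
  vadd : carrier -> carrier -> carrier;
  vopp : carrier -> carrier;
  vscal : R -> carrier -> carrier;
  vnorm : carrier -> R;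
  vaddA : forall x y z, vadd x (vadd y z) = vadd (vadd x y) z;
  vaddC : forall x y, vadd x y = vadd y x;
  vadd0 : forall x, vadd x vzero = x;
  vaddN : forall x, vadd x (vopp x) = vzero;
  vscalA : forall a b x, vscal a (vscal b x) = vscal (a * b) x;
  vscal1 : forall x, vscal 1 x = x;
  vscalDv : forall a x y, vscal a (vadd x y) = vadd (vscal a x) (vscal a y);
  vscalDs : forall a b x, vscal (a + b) x = vadd (vscal a x) (vscal b x);
  vnorm_eq0 : forall x, vnorm x = 0 -> x = vzero;
  vnorm_scal : forall a x, vnorm (vscal a x) = Rabs a * vnorm x;
  vnorm_triangle : forall x y, vnorm (vadd x y) <= vnorm x + vnorm y
}.

Arguments vzero {n}.
Arguments vadd {n}.
Arguments vopp {n}.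
Arguments vscal {n}.
Arguments vnorm {n}.

Definition vsub {B : NormedSpace} (x y : B) : B := vadd x (vopp y).

Definition complete (B : NormedSpace) : Prop :=
  forall u : nat -> B,
    (forall eps, 0 < eps -> exists N, forall n k, (N <= n)%nat -> (N <= k)%nat ->
        vnorm (vsub (u n) (u k)) < eps) ->
    exists l : B, forall eps, 0 < eps -> exists N, forall n, (N <= n)%nat ->
        vnorm (vsub (u n) l) < eps.

Definition uniformly_convex (B : NormedSpace) : Prop :=
  forall eps, 0 < eps <= 2 -> exists delta, 0 < delta /\
    forall x y : B, vnorm x <= 1 -> vnorm y <= 1 -> eps <= vnorm (vsub x y) ->
      vnorm (vscal (1/2) (vadd x y)) <= 1 - delta.

(* Uniform smoothness: the modulus of smoothness rho(t) satisfies rho(t)/t -> 0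
   as t -> 0+, where rho(t) = sup_{|x|=|y|=1} (|x+ty|+|x-ty|)/2 - 1. *)
Definition uniformly_smooth (B : NormedSpace) : Prop :=
  forall eps, 0 < eps -> exists tau, 0 < tau /\
    forall t, 0 < t < tau -> forall x y : B, vnorm x = 1 -> vnorm y = 1 ->
      (vnorm (vadd x (vscal t y)) + vnorm (vsub x (vscal t y))) / 2 - 1 <= eps * t.

Definition uniform_Banach (B : NormedSpace) : Prop :=
  complete B /\ uniformly_convex B /\ uniformly_smooth B.

Definition is_sip (B : NormedSpace) (sip : B -> B -> R) : Prop :=
  (forall y : B, sip y vzero = 0) /\
  (forall x y : B, x <> vzero ->
     derivable_pt_lim (fun t => vnorm (vadd x (vscal t y))) 0 (sip y x / vnorm x)).

Fixpoint rsum (m : nat) (f : nat -> R) : R :=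
  match m with
  | O => 0
  | S k => rsum k f + f k
  end.

Definition interpolates {B : NormedSpace} (sip : B -> B -> R) (m : nat)
  (x : nat -> B) (y : nat -> R) (f : B) : Prop :=
  forall i, (i < m)%nat -> sip f (x i) = y i.

Definition is_minimiser {B : NormedSpace} (sip : B -> B -> R) (J : B -> R)
  (m : nat) (x : nat -> B) (y : nat -> R) (f : B) : Prop :=
  interpolates sip m x y f /\
  forall g, interpolates sip m x y g -> J f <= J g.

(* f^* = sum_{i<m} c_i x_i^*, where z^*(w) = [w, z]. *)
Definition dual_in_span {B : NormedSpace} (sip : B -> B -> R) (m : nat)
  (x : nat -> B) (f : B) : Prop :=
  exists c : nat -> R, forall w : B, sip w f = rsum m (fun i => c i * sip w (x i)).

Definition admissible {B : NormedSpace} (sip : B -> B -> R) (Omega : B -> R) : Prop :=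
  forall (m : nat) (x : nat -> B) (y : nat -> R),
    (1 <= m)%nat ->
    (exists f, interpolates sip m x y f) ->
    exists f0, is_minimiser sip Omega m x y f0 /\ dual_in_span sip m x f0.

(* The semi-inner product is the derivative of the convex function t |-> ||f0 + t g||, so
   [g, f0] <= ||f0|| (||f0 + g|| - ||f0||) <= ||f0|| ||g||.  If f0^* lies in the span of the
   x_i^* and g interpolates the same data as f0, then [g, f0] = [f0, f0] = ||f0||^2, whence
   ||f0|| <= ||g||: f0 has minimal norm.  Equality ||g|| = ||f0|| forces
   ||f0 + g|| = ||f0|| + ||g||, hence g = f0 by (uniform, hence strict) convexity.  So the minimal
   norm interpolant is unique, and it coincides with the minimiser of Omega supplied by
   admissibility, which also has its dual in the span. *)

From Stdlib Require Import Reals Lra Lia Classical.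
Open Scope R_scope.

Lemma derivable_pt_lim_le (h : R -> R) (l M : R) :
  derivable_pt_lim h 0 l ->
  (forall t, 0 < t <= 1 -> h t - h 0 <= M * t) -> l <= M.
Proof.
  intros Dh Hh. destruct (Rle_dec l M) as [|Hlt]; [assumption|exfalso].
  destruct (Dh (l - M)) as [d Hd]; [lra|].
  pose proof (cond_pos d) as Hd0.
  set (t := Rmin (d / 2) 1).
  assert (Ht : 0 < t <= 1).
  { split; [apply Rmin_glb_lt; lra | apply Rmin_r]. }
  assert (Htd : Rabs t < d).
  { rewrite Rabs_right by lra. pose proof (Rmin_l (d / 2) 1). unfold t in *; lra. }
  specialize (Hd t ltac:(lra) Htd). rewrite Rplus_0_l in Hd.
  apply Rabs_def2 in Hd as [_ Hd].
  specialize (Hh t Ht).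
  assert (Hq : (h t - h 0) / t <= M).
  { apply (Rmult_le_reg_r t); [lra|]. unfold Rdiv. rewrite Rmult_assoc, Rinv_l; lra. }
  lra.
Qed.

Lemma derivable_pt_lim_ge (h : R -> R) (l M : R) :
  derivable_pt_lim h 0 l ->
  (forall t, 0 < t <= 1 -> M * t <= h t - h 0) -> M <= l.
Proof.
  intros Dh Hh.
  enough (- l <= - M) by lra.
  apply (derivable_pt_lim_le (- h)%F); [now apply derivable_pt_lim_opp|].
  intros t Ht. unfold opp_fct. specialize (Hh t Ht). lra.
Qed.

Lemma rsum_ext (m : nat) (f g : nat -> R) :
  (forall i, (i < m)%nat -> f i = g i) -> rsum m f = rsum m g.
Proof.
  induction m as [|m IHm]; intros Hfg; simpl; [reflexivity|].
  rewrite IHm by (intros; apply Hfg; lia). rewrite Hfg by lia. reflexivity.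
Qed.

Section NormedSpaceFacts.

Variable B : NormedSpace.

Lemma vscal0 (x : B) : vscal 0 x = vzero.
Proof.
  set (a := vscal 0 x).
  assert (Ea : a = vadd a a) by (unfold a; rewrite <- vscalDs; f_equal; ring).
  rewrite <- (vaddN _ a). rewrite Ea at 2. rewrite <- vaddA, vaddN, vadd0. reflexivity.
Qed.

Lemma vnorm0 : vnorm (@vzero B) = 0.
Proof. rewrite <- (vscal0 vzero), vnorm_scal, Rabs_R0. ring. Qed.

Lemma vnorm_ge0 (x : B) : 0 <= vnorm x.
Proof.
  pose proof (vnorm_triangle _ (vscal 1 x) (vscal (-1) x)) as Htri.
  rewrite <- vscalDs, Rplus_opp_r, vscal0, vnorm0, !vnorm_scal, Rabs_R1 in Htri.
  rewrite (Rabs_left (-1)) in Htri by lra.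
  lra.
Qed.

Lemma vnorm_gt0 (x : B) : x <> vzero -> 0 < vnorm x.
Proof.
  intro Hx. destruct (vnorm_ge0 x) as [|Hx0]; [assumption|].
  exfalso. apply Hx, vnorm_eq0. symmetry. exact Hx0.
Qed.

Lemma vsub_eq0 (u v : B) : vsub u v = vzero -> u = v.
Proof.
  unfold vsub. intro Huv.
  rewrite <- (vadd0 _ u), <- (vaddN _ v), (vaddC _ v), vaddA, Huv, vaddC, vadd0.
  reflexivity.
Qed.

Lemma vnorm_scal_ge0 (a : R) (x : B) : 0 <= a -> vnorm (vscal a x) = a * vnorm x.
Proof. intro Ha. rewrite vnorm_scal, Rabs_right; lra. Qed.

Lemma vnorm_add_scal_le (x y : B) (t : R) : 0 <= t <= 1 ->
  vnorm (vadd x (vscal t y)) <= (1 - t) * vnorm x + t * vnorm (vadd x y).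
Proof.
  intro Ht.
  assert (Ex : vadd x (vscal t y) = vadd (vscal (1 - t) x) (vscal t (vadd x y))).
  { rewrite vscalDv, vaddA, <- vscalDs. replace (1 - t + t) with 1 by ring.
    rewrite vscal1. reflexivity. }
  rewrite Ex, <- (vnorm_scal_ge0 (1 - t)), <- (vnorm_scal_ge0 t) by lra.
  apply vnorm_triangle.
Qed.

(* Strict convexity is all that is used of uniform convexity. *)
Lemma uniformly_convex_eq_of_vnorm_add (x y : B) : uniformly_convex B ->
  vnorm x = vnorm y -> vnorm (vadd x y) = vnorm x + vnorm y -> x = y.
Proof.
  intros Hconv Exy Eadd.
  destruct (classic (x = vzero)) as [Hx0|Hx0].
  { subst x. symmetry. apply vnorm_eq0. rewrite <- Exy. apply vnorm0. }
  destruct (classic (x = y)) as [|Hxy]; [assumption|exfalso].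
  pose proof (vnorm_gt0 x Hx0) as Hr. set (r := vnorm x) in *.
  set (u := vscal (1 / r) x). set (v := vscal (1 / r) y).
  assert (Hr' : 0 <= 1 / r) by (left; apply Rdiv_lt_0_compat; lra).
  assert (Hu : vnorm u = 1) by (unfold u; rewrite vnorm_scal_ge0 by lra; fold r; field; lra).
  assert (Hv : vnorm v = 1)
    by (unfold v; rewrite vnorm_scal_ge0, <- Exy by lra; fold r; field; lra).
  assert (Huv : 0 < vnorm (vsub u v)).
  { apply vnorm_gt0. intro Huv. apply Hxy.
    rewrite <- (vscal1 _ x), <- (vscal1 _ y).
    replace 1 with (r * (1 / r)) by (field; lra).
    rewrite <- !vscalA. fold u v. now rewrite (vsub_eq0 u v Huv). }
  set (eps := Rmin (vnorm (vsub u v)) 2).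
  destruct (Hconv eps) as [delta [Hdelta Hmid]].
  { split; [apply Rmin_glb_lt; lra | apply Rmin_r]. }
  specialize (Hmid u v ltac:(lra) ltac:(lra) (Rmin_l _ _)).
  unfold u, v in Hmid.
  rewrite <- vscalDv, vscalA, vnorm_scal_ge0, Eadd, <- Exy in Hmid by lra.
  replace (1 / 2 * (1 / r) * (r + r)) with 1 in Hmid by (field; lra).
  lra.
Qed.

End NormedSpaceFacts.

Section SemiInnerProduct.

Variable B : NormedSpace.
Variable sip : B -> B -> R.
Hypothesis Hsip : is_sip B sip.

Lemma sip_le_of_increment_le (x y : B) (M : R) : x <> vzero ->
  (forall t, 0 < t <= 1 -> vnorm (vadd x (vscal t y)) - vnorm x <= M * t) ->
  sip y x <= M * vnorm x.
Proof.
  intros Hx Hinc. pose proof (vnorm_gt0 B x Hx) as Hr.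
  assert (Hq : sip y x / vnorm x <= M).
  { apply (derivable_pt_lim_le _ _ _ (proj2 Hsip x y Hx)).
    intros t Ht. rewrite vscal0, vadd0. auto. }
  apply (Rmult_le_compat_r (vnorm x)) in Hq; [|lra].
  unfold Rdiv in Hq. rewrite Rmult_assoc, Rinv_l in Hq; lra.
Qed.

Lemma sip_ge_of_increment_ge (x y : B) (M : R) : x <> vzero ->
  (forall t, 0 < t <= 1 -> M * t <= vnorm (vadd x (vscal t y)) - vnorm x) ->
  M * vnorm x <= sip y x.
Proof.
  intros Hx Hinc. pose proof (vnorm_gt0 B x Hx) as Hr.
  assert (Hq : M <= sip y x / vnorm x).
  { apply (derivable_pt_lim_ge _ _ _ (proj2 Hsip x y Hx)).
    intros t Ht. rewrite vscal0, vadd0. auto. }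
  apply (Rmult_le_compat_r (vnorm x)) in Hq; [|lra].
  unfold Rdiv in Hq. rewrite Rmult_assoc, Rinv_l in Hq; lra.
Qed.

Lemma sip_self (x : B) : sip x x = vnorm x * vnorm x.
Proof.
  destruct (classic (x = vzero)) as [->|Hx].
  { rewrite (proj1 Hsip), vnorm0. ring. }
  assert (Hinc : forall t, 0 < t <= 1 -> vnorm (vadd x (vscal t x)) - vnorm x = vnorm x * t).
  { intros t Ht. rewrite <- (vscal1 _ x) at 1.
    rewrite <- vscalDs, vnorm_scal_ge0 by lra. ring. }
  apply Rle_antisym.
  - apply sip_le_of_increment_le; [assumption|]. intros t Ht. rewrite Hinc; lra.
  - apply sip_ge_of_increment_ge; [assumption|]. intros t Ht. rewrite Hinc; lra.
Qed.

Lemma sip_le_vnorm_increment (x y : B) :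
  sip y x <= vnorm x * (vnorm (vadd x y) - vnorm x).
Proof.
  destruct (classic (x = vzero)) as [->|Hx].
  { rewrite (proj1 Hsip), vnorm0. lra. }
  rewrite Rmult_comm. apply sip_le_of_increment_le; [assumption|].
  intros t Ht. pose proof (vnorm_add_scal_le B x y t ltac:(lra)). lra.
Qed.

Lemma sip_le_vnorm_mul (x y : B) : sip y x <= vnorm y * vnorm x.
Proof.
  pose proof (sip_le_vnorm_increment x y).
  pose proof (vnorm_triangle _ x y). pose proof (vnorm_ge0 B x).
  nra.
Qed.

Variables (m : nat) (x : nat -> B) (y : nat -> R).

Lemma sip_interpolant_dual_in_span (f g : B) :
  interpolates sip m x y f -> interpolates sip m x y g -> dual_in_span sip m x f ->
  sip g f = vnorm f * vnorm f.
Proof.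
  intros Hf Hg [c Hc]. rewrite <- sip_self, !Hc.
  apply rsum_ext. intros i Hi. rewrite Hf, Hg by assumption. reflexivity.
Qed.

Lemma dual_in_span_is_minimiser_vnorm (f : B) :
  interpolates sip m x y f -> dual_in_span sip m x f -> is_minimiser sip vnorm m x y f.
Proof.
  intros Hf Hspan. split; [assumption|]. intros g Hg.
  pose proof (sip_interpolant_dual_in_span f g Hf Hg Hspan).
  pose proof (sip_le_vnorm_mul f g). pose proof (vnorm_ge0 B f). pose proof (vnorm_ge0 B g).
  nra.
Qed.

Lemma dual_in_span_minimiser_vnorm_unique (f g : B) : uniformly_convex B ->
  interpolates sip m x y f -> interpolates sip m x y g -> dual_in_span sip m x f ->
  vnorm g = vnorm f -> g = f.
Proof.
  intros Hconv Hf Hg Hspan Egf.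
  pose proof (sip_interpolant_dual_in_span f g Hf Hg Hspan) as Hsgf.
  pose proof (sip_le_vnorm_increment f g) as Hinc.
  pose proof (vnorm_triangle _ f g). pose proof (vnorm_ge0 B f).
  symmetry. apply uniformly_convex_eq_of_vnorm_add; [assumption|now symmetry|].
  rewrite Egf. destruct (Req_dec (vnorm f) 0) as [Hf0|Hf0].
  - rewrite Hf0 in *. pose proof (vnorm_ge0 B (vadd f g)). lra.
  - apply Rle_antisym; [lra|]. rewrite Hsgf in Hinc.
    apply (Rmult_le_reg_l (vnorm f)); nra.
Qed.

End SemiInnerProduct.

Theorem theorem4p1 (B : NormedSpace) (sip : B -> B -> R) (Omega : B -> R)
  (HB : uniform_Banach B) (Hsip : is_sip B sip) (Hadm : admissible sip Omega)
  (m : nat) (x : nat -> B) (y : nat -> R) (Hm : (1 <= m)%nat)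
  (Hfeas : exists f, interpolates sip m x y f)
  (f0 : B) (Hf0 : dual_in_span sip m x f0) :
  is_minimiser sip Omega m x y f0 <-> is_minimiser sip vnorm m x y f0.
Proof.
  destruct HB as [_ [Hconv _]].
  split.
  - intros [Hint _]. now apply (dual_in_span_is_minimiser_vnorm B sip Hsip).
  - intros [Hint Hmin].
    destruct (Hadm m x y Hm Hfeas) as [f1 [[Hint1 Homega] Hspan1]].
    destruct (dual_in_span_is_minimiser_vnorm B sip Hsip m x y f1 Hint1 Hspan1)
      as [_ Hmin1].
    assert (Ef : f1 = f0).
    { apply (dual_in_span_minimiser_vnorm_unique B sip Hsip m x y); try assumption.
      apply Rle_antisym; auto. }
    subst f1. split; assumption.
Qed.
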